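(* Let $\alpha\in(0,\pi]$ and $x,y\in S_\alpha$ with $|y|\le|x|$. Then \[ k_{S_\alpha}(x,y)\ge\frac{1}{\sin\frac{\alpha}{2}}\log\frac{|x|}{|y|}. \]
   Context: $S_\alpha=\{\rho e^{it}:\rho>0,\ t\in(0,\alpha)\}\subset\mathbb{C}$. For a domain $G\subsetneq\mathbb{R}^2$, $k_G(x,y)=\inf_\gamma\int_\gamma\frac{|dz|}{d(z,\partial G)}$, the infimum over rectifiable curves $\gamma\subset G$ joining $x$ and $y$ (quasihyperbolic distance). *)

From Stdlib Require Import Reals Lra Lia ClassicalEpsilon.
Open Scope R_scope.

Definition pt := (R * R)%type.

Definition cnorm (z : pt) : R := sqrt (fst z ^ 2 + snd z ^ 2).
Definition cdist (z w : pt) : R :=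
  sqrt ((fst z - fst w) ^ 2 + (snd z - snd w) ^ 2).

Definition sector (alpha : R) (z : pt) : Prop :=
  exists rho t, 0 < rho /\ 0 < t < alpha /\ z = (rho * cos t, rho * sin t).

(* Greatest lower bound / least upper bound of a set of reals,
   chosen by classical choice (meaningful when they exist). *)
Definition is_glb_R (A : R -> Prop) (r : R) : Prop :=
  (forall a, A a -> r <= a) /\ (forall s, (forall a, A a -> s <= a) -> s <= r).
Definition Inf_R (A : R -> Prop) : R :=
  epsilon (inhabits 0) (fun r => is_glb_R A r).
Definition Sup_R (A : R -> Prop) : R :=
  epsilon (inhabits 0) (fun r => is_lub A r).

Definition boundary (G : pt -> Prop) (w : pt) : Prop :=
  forall eps, 0 < eps ->
    (exists z, G z /\ cdist z w < eps) /\ (exists z, ~ G z /\ cdist z w < eps).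

Definition dist_set (A : pt -> Prop) (z : pt) : R :=
  Inf_R (fun s => exists w, A w /\ s = cdist z w).

Fixpoint sumR (n : nat) (f : nat -> R) : R :=
  match n with
  | O => 0
  | S k => sumR k f + f k
  end.

Definition partition01 (n : nat) (p : nat -> R) : Prop :=
  p O = 0 /\ p n = 1 /\ (forall i, (i < n)%nat -> p i <= p (S i)).

Definition curve_in (G : pt -> Prop) (gamma : R -> pt) (x y : pt) : Prop :=
  gamma 0 = x /\ gamma 1 = y /\
  (forall t, 0 <= t <= 1 -> G (gamma t)) /\
  (forall t, 0 <= t <= 1 -> forall eps, 0 < eps -> exists delta, 0 < delta /\
     forall s, 0 <= s <= 1 -> Rabs (s - t) < delta -> cdist (gamma s) (gamma t) < eps).

Definition rectifiable (gamma : R -> pt) : Prop :=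
  exists B, forall n p, partition01 n p ->
    sumR n (fun i => cdist (gamma (p (S i))) (gamma (p i))) <= B.

(* Lower Darboux-Stieltjes sums of  |dz| / d(z, boundary G)  along gamma:
   m i is any lower bound of the weight on the i-th subarc. *)
Definition qh_lower_sum (G : pt -> Prop) (gamma : R -> pt) (v : R) : Prop :=
  exists n p m, partition01 n p /\
    (forall i, (i < n)%nat -> forall t, p i <= t <= p (S i) ->
        m i <= / dist_set (boundary G) (gamma t)) /\
    v = sumR n (fun i => m i * cdist (gamma (p (S i))) (gamma (p i))).

(* Quasihyperbolic length  int_gamma |dz| / d(z, boundary G)
   (supremum of lower sums; the weight is continuous). *)
Definition qh_length (G : pt -> Prop) (gamma : R -> pt) : R :=
  Sup_R (qh_lower_sum G gamma).

Definition k_dist (G : pt -> Prop) (x y : pt) : R :=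
  Inf_R (fun v => exists gamma, curve_in G gamma x y /\ rectifiable gamma /\
                                v = qh_length G gamma).

(* The distance from z in S_alpha to the boundary is at most |z| sin(alpha/2), since
   the nearer edge is seen from z at an angle at most alpha/2.  Given a curve from x
   to y, fix N and levels a_k = |x| q^k with q^N = |y|/|x|, and cut the curve at the
   last times T_k where |gamma| = a_k.  On [T_k, T_(k+1)] the curve stays in
   |z| <= a_k and has length at least a_k - a_(k+1), so the quasihyperbolic length is
   at least N (1 - q) / sin(alpha/2), which tends to log(|x|/|y|) / sin(alpha/2). *)

From Stdlib Require Import Reals Lra Lia ClassicalEpsilon.
Open Scope R_scope.

Lemma cauchy_schwarz2 (u1 u2 v1 v2 : R) :
  u1 * v1 + u2 * v2 <= sqrt (u1 ^ 2 + u2 ^ 2) * sqrt (v1 ^ 2 + v2 ^ 2).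
Proof. rewrite <- !Rsqr_pow2. apply sqrt_cauchy. Qed.

Lemma cdist_ge0 (z w : pt) : 0 <= cdist z w.
Proof. apply sqrt_pos. Qed.

Lemma cdist_sym (z w : pt) : cdist z w = cdist w z.
Proof. unfold cdist; f_equal; ring. Qed.

Lemma cdist_refl (z : pt) : cdist z z = 0.
Proof. unfold cdist. rewrite !Rminus_diag, pow_i, Rplus_0_r by lia. apply sqrt_0. Qed.

Lemma cdist_triangle (a b c : pt) : cdist a c <= cdist a b + cdist b c.
Proof.
  unfold cdist.
  set (x1 := fst a - fst b); set (x2 := snd a - snd b).
  set (y1 := fst b - fst c); set (y2 := snd b - snd c).
  replace (fst a - fst c) with (x1 + y1) by (unfold x1, y1; ring).
  replace (snd a - snd c) with (x2 + y2) by (unfold x2, y2; ring).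
  pose proof (sqrt_pos (x1 ^ 2 + x2 ^ 2)); pose proof (sqrt_pos (y1 ^ 2 + y2 ^ 2)).
  rewrite <- (sqrt_square (sqrt (x1 ^ 2 + x2 ^ 2) + sqrt (y1 ^ 2 + y2 ^ 2))) by lra.
  apply sqrt_le_1_alt.
  pose proof (sqrt_sqrt (x1 ^ 2 + x2 ^ 2) ltac:(nra)).
  pose proof (sqrt_sqrt (y1 ^ 2 + y2 ^ 2) ltac:(nra)).
  pose proof (cauchy_schwarz2 x1 x2 y1 y2). nra.
Qed.

Lemma cnorm_cdist0 (z : pt) : cnorm z = cdist z (0, 0).
Proof. unfold cnorm, cdist; simpl; f_equal; ring. Qed.

Lemma cnorm_polar (rho t : R) : 0 <= rho -> cnorm (rho * cos t, rho * sin t) = rho.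
Proof.
  intros Hrho. unfold cnorm; cbn [fst snd].
  replace ((rho * cos t) ^ 2 + (rho * sin t) ^ 2) with (rho * rho * (Rsqr (sin t) + Rsqr (cos t)))
    by (unfold Rsqr; ring).
  rewrite sin2_cos2, Rmult_1_r. now apply sqrt_square.
Qed.

Definition lipschitz1 (F : pt -> R) : Prop := forall z w, F z - F w <= cdist z w.

Lemma lipschitz1_abs (F : pt -> R) (z w : pt) :
  lipschitz1 F -> Rabs (F z - F w) <= cdist z w.
Proof.
  intros HF. pose proof (HF z w). pose proof (HF w z) as Hwz. rewrite cdist_sym in Hwz.
  unfold Rabs; destruct Rcase_abs; lra.
Qed.

Lemma cnorm_lipschitz1 : lipschitz1 cnorm.
Proof. intros z w. rewrite !cnorm_cdist0. pose proof (cdist_triangle z w (0, 0)). lra. Qed.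

Lemma unit_functional_lipschitz1 (a b : R) :
  a ^ 2 + b ^ 2 = 1 -> lipschitz1 (fun z => fst z * a + snd z * b).
Proof.
  intros Hab z w. unfold cdist.
  pose proof (cauchy_schwarz2 (fst z - fst w) (snd z - snd w) a b) as Hcs.
  rewrite Hab, sqrt_1 in Hcs. lra.
Qed.

Definition lerp (w z : pt) (s : R) : pt :=
  (fst w + s * (fst z - fst w), snd w + s * (snd z - snd w)).

Lemma lerp0 (w z : pt) : lerp w z 0 = w.
Proof. destruct w; unfold lerp; simpl; f_equal; ring. Qed.

Lemma lerp1 (w z : pt) : lerp w z 1 = z.
Proof. destruct z; unfold lerp; simpl; f_equal; ring. Qed.

Lemma cdist_lerp (w z : pt) (s t : R) :
  cdist (lerp w z s) (lerp w z t) = Rabs (s - t) * cdist z w.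
Proof.
  unfold lerp, cdist; cbn [fst snd].
  replace ((fst w + s * (fst z - fst w) - (fst w + t * (fst z - fst w))) ^ 2 +
           (snd w + s * (snd z - snd w) - (snd w + t * (snd z - snd w))) ^ 2)
    with ((s - t) * (s - t) * ((fst z - fst w) ^ 2 + (snd z - snd w) ^ 2)) by ring.
  rewrite sqrt_mult_alt by apply Rle_0_sqr. f_equal. apply sqrt_Rsqr_abs.
Qed.

Lemma Inf_R_glb (A : R -> Prop) :
  (exists a, A a) -> (exists m, forall a, A a -> m <= a) -> is_glb_R A (Inf_R A).
Proof.
  intros [a Ha] [m Hm]. unfold Inf_R. apply epsilon_spec.
  destruct (completeness (fun b => A (- b))) as [l [Hub Hlub]].
  - exists (- m). intros b Hb. specialize (Hm _ Hb). lra.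
  - exists (- a). now rewrite Ropp_involutive.
  - exists (- l). split.
    + intros b Hb. assert (- b <= l) by (apply Hub; now rewrite Ropp_involutive). lra.
    + intros s Hs. assert (l <= - s) by (apply Hlub; intros b Hb; specialize (Hs _ Hb); lra). lra.
Qed.

Lemma Sup_R_lub (A : R -> Prop) :
  (exists a, A a) -> (exists M, forall a, A a -> a <= M) -> is_lub A (Sup_R A).
Proof.
  intros Hne [M HM]. unfold Sup_R. apply epsilon_spec.
  destruct (completeness A) as [l Hl]; [now exists M | auto | now exists l].
Qed.

Lemma dist_set_glb (A : pt -> Prop) (z : pt) :
  (exists w, A w) -> is_glb_R (fun s => exists w, A w /\ s = cdist z w) (dist_set A z).
Proof.
  intros [w Hw]. apply Inf_R_glb; [now exists (cdist z w), w |].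
  exists 0. intros s [u [_ ->]]. apply cdist_ge0.
Qed.

Lemma dist_set_le (A : pt -> Prop) (z w : pt) : A w -> dist_set A z <= cdist z w.
Proof.
  intros Hw. destruct (dist_set_glb A z (ex_intro _ w Hw)) as [Hlb _]. apply Hlb. now exists w.
Qed.

Lemma dist_set_ge (A : pt -> Prop) (z : pt) (c : R) :
  (exists w, A w) -> (forall w, A w -> c <= cdist z w) -> c <= dist_set A z.
Proof.
  intros Hne Hc. destruct (dist_set_glb A z Hne) as [_ Hglb].
  apply Hglb. intros s [w [Hw ->]]. now apply Hc.
Qed.

Lemma cdist_ray_projection (rho t th : R) :
  0 <= rho ->
  cdist (rho * cos t, rho * sin t) (rho * cos (t - th) * cos th, rho * cos (t - th) * sin th)
  = rho * Rabs (sin (t - th)).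
Proof.
  intros Hrho. unfold cdist; cbn [fst snd].
  set (u := t - th). replace t with (u + th) by (unfold u; ring).
  rewrite cos_plus, sin_plus.
  replace ((rho * (cos u * cos th - sin u * sin th) - rho * cos u * cos th) ^ 2 +
           (rho * (sin u * cos th + cos u * sin th) - rho * cos u * sin th) ^ 2)
    with (Rsqr (rho * sin u) * (Rsqr (sin th) + Rsqr (cos th))) by (unfold Rsqr; ring).
  rewrite sin2_cos2, Rmult_1_r, sqrt_Rsqr_abs, Rabs_mult, Rabs_pos_eq; auto.
Qed.

Lemma sumR_ext (n : nat) (f g : nat -> R) :
  (forall i, (i < n)%nat -> f i = g i) -> sumR n f = sumR n g.
Proof. induction n; simpl; intros H; auto. rewrite IHn, H; auto. Qed.

Lemma sumR_le (n : nat) (f g : nat -> R) :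
  (forall i, (i < n)%nat -> f i <= g i) -> sumR n f <= sumR n g.
Proof.
  induction n; simpl; intros H; [lra |].
  pose proof (H n ltac:(lia)). enough (sumR n f <= sumR n g) by lra. auto.
Qed.

Lemma sumR_scal (n : nat) (c : R) (f : nat -> R) : sumR n (fun i => c * f i) = c * sumR n f.
Proof. induction n; simpl; [ring | rewrite IHn; ring]. Qed.

Lemma sumR_const (n : nat) (c : R) : sumR n (fun _ => c) = INR n * c.
Proof. induction n; simpl sumR; [simpl; ring | rewrite IHn, S_INR; ring]. Qed.

Lemma sumR_shift (n : nat) (f : nat -> R) : sumR (S n) f = f O + sumR n (fun i => f (S i)).
Proof. induction n; simpl in *; [ring | rewrite IHn; ring]. Qed.

Lemma sumR_telescope (n : nat) (f : nat -> R) : sumR n (fun i => f i - f (S i)) = f O - f n.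
Proof. induction n; simpl; [ring | rewrite IHn; ring]. Qed.

Lemma partition01_range (n : nat) (p : nat -> R) :
  partition01 n p -> forall i, (i <= n)%nat -> 0 <= p i <= 1.
Proof.
  intros [H0 [H1 Hmon]].
  assert (Hup : forall i k, (i + k <= n)%nat -> p i <= p (i + k)%nat).
  { intros i k; induction k as [| k IH]; intros Hk; rewrite ?Nat.add_0_r; [lra |].
    rewrite Nat.add_succ_r. specialize (Hmon (i + k)%nat ltac:(lia)). specialize (IH ltac:(lia)). lra. }
  intros i Hi. split.
  - rewrite <- H0. apply (Hup O i). lia.
  - rewrite <- H1. replace n with (i + (n - i))%nat by lia. apply Hup. lia.
Qed.

Definition pad01 (N : nat) (T : nat -> R) (i : nat) : R :=
  match i with O => 0 | S j => if (j <=? N)%nat then T j else 1 end.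

Definition pad0 (N : nat) (w : nat -> R) (i : nat) : R :=
  match i with O => 0 | S j => if (j <? N)%nat then w j else 0 end.

Lemma partition01_pad01 (N : nat) (T : nat -> R) :
  (forall k, (k <= N)%nat -> 0 <= T k <= 1) -> (forall k, (k < N)%nat -> T k <= T (S k)) ->
  partition01 (S (S N)) (pad01 N T).
Proof.
  intros Hrange Hmon. split; [reflexivity | split].
  - unfold pad01. destruct (Nat.leb_spec (S N) N); [lia | reflexivity].
  - intros [| j] Hj; unfold pad01.
    + destruct (Nat.leb_spec 0 N); [apply Hrange |]; lia.
    + destruct (Nat.leb_spec j N), (Nat.leb_spec (S j) N); try lia.
      * apply Hmon; lia.
      * apply Hrange; lia.
Qed.

Lemma sumR_pad (N : nat) (T w : nat -> R) (l : R -> R -> R) :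
  sumR (S (S N)) (fun i => pad0 N w i * l (pad01 N T (S i)) (pad01 N T i))
  = sumR N (fun j => w j * l (T (S j)) (T j)).
Proof.
  assert (Hlast : pad0 N w (S N) = 0) by (simpl; destruct (Nat.ltb_spec N N); [lia | reflexivity]).
  rewrite sumR_shift. cbn [sumR]. rewrite Hlast. cbn [pad0]. rewrite !Rmult_0_l, Rplus_0_l, Rplus_0_r.
  apply sumR_ext. intros j Hj. unfold pad0, pad01.
  destruct (Nat.ltb_spec j N), (Nat.leb_spec j N), (Nat.leb_spec (S j) N); try lia; reflexivity.
Qed.

Definition cont01 (f : R -> R) : Prop :=
  forall t, 0 <= t <= 1 -> forall eps, 0 < eps -> exists delta, 0 < delta /\
    forall s, 0 <= s <= 1 -> Rabs (s - t) < delta -> Rabs (f s - f t) < eps.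

Definition clamp01 (t : R) : R := Rmax 0 (Rmin 1 t).

Lemma clamp01_range (t : R) : 0 <= clamp01 t <= 1.
Proof. unfold clamp01, Rmax, Rmin. repeat destruct Rle_dec; lra. Qed.

Lemma clamp01_id (t : R) : 0 <= t <= 1 -> clamp01 t = t.
Proof. intros. unfold clamp01, Rmax, Rmin. repeat destruct Rle_dec; lra. Qed.

Lemma clamp01_contract (s t : R) : Rabs (clamp01 s - clamp01 t) <= Rabs (s - t).
Proof. unfold clamp01, Rmax, Rmin, Rabs. repeat destruct Rle_dec; repeat destruct Rcase_abs; lra. Qed.

Lemma cont01_clamp01 (f : R -> R) (c : R) : cont01 f -> continuity_pt (fun t => f (clamp01 t)) c.
Proof.
  intros Hf eps Heps.
  destruct (Hf (clamp01 c) (clamp01_range c) eps Heps) as [d [Hd Hfd]].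
  exists d. split; auto. intros t [_ Ht]. simpl in *. unfold Rdist in *.
  apply Hfd; [apply clamp01_range |]. pose proof (clamp01_contract t c). lra.
Qed.

Lemma cont01_min (f : R -> R) :
  cont01 f -> exists c, 0 <= c <= 1 /\ forall t, 0 <= t <= 1 -> f c <= f t.
Proof.
  intros Hf. destruct (continuity_ab_min (fun t => f (clamp01 t)) 0 1) as [c [Hmin Hc]]; [lra | |].
  - intros c _. now apply cont01_clamp01.
  - exists c. split; auto. intros t Ht. specialize (Hmin t Ht). now rewrite !clamp01_id in Hmin.
Qed.

Definition last_reach (f : R -> R) (a : R) : R := Sup_R (fun t => 0 <= t <= 1 /\ a <= f t).

Lemma last_reach_lub (f : R -> R) (a : R) :
  a <= f 0 -> is_lub (fun t => 0 <= t <= 1 /\ a <= f t) (last_reach f a).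
Proof.
  intros Ha. apply Sup_R_lub.
  - exists 0. split; [lra | auto].
  - exists 1. intros t [Ht _]. lra.
Qed.

Lemma last_reach_antitone (f : R -> R) (a b : R) :
  b <= a <= f 0 -> last_reach f a <= last_reach f b.
Proof.
  intros Hab. destruct (last_reach_lub f a ltac:(lra)) as [_ Hlub].
  destruct (last_reach_lub f b ltac:(lra)) as [Hub _].
  apply Hlub. intros t [Ht Hat]. apply Hub. split; auto; lra.
Qed.

Lemma last_reach_spec (f : R -> R) (a : R) :
  cont01 f -> f 1 <= a <= f 0 ->
  let T := last_reach f a in
  0 <= T <= 1 /\ f T = a /\ forall t, T < t <= 1 -> f t < a.
Proof.
  intros Hf Ha T. destruct (last_reach_lub f a ltac:(lra)) as [Hub Hlub]. fold T in Hub, Hlub.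
  assert (HT0 : 0 <= T) by (apply Hub; split; lra).
  assert (HT1 : T <= 1) by (apply Hlub; intros t [Ht _]; lra).
  assert (Hafter : forall t, T < t <= 1 -> f t < a).
  { intros t Ht. destruct (Rlt_le_dec (f t) a) as [| Hle]; auto.
    assert (t <= T) by (apply Hub; split; lra). lra. }
  repeat split; auto. apply Rle_antisym.
  - destruct (Rle_lt_dec (f T) a) as [| Hgt]; auto.
    destruct (Hf T ltac:(lra) (f T - a) ltac:(lra)) as [d [Hd Hfd]].
    destruct (Req_dec T 1) as [E | NE]; [rewrite E in Hgt; lra |].
    set (t := Rmin 1 (T + d / 2)).
    assert (Ht : T < t <= 1) by (unfold t, Rmin; destruct Rle_dec; lra).
    assert (Htd : Rabs (t - T) < d) by (unfold t, Rmin, Rabs; destruct Rle_dec, Rcase_abs; lra).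
    specialize (Hafter t Ht). specialize (Hfd t ltac:(lra) Htd).
    unfold Rabs in Hfd; destruct Rcase_abs in Hfd; lra.
  - destruct (Rle_lt_dec a (f T)) as [| Hlt]; auto.
    destruct (Hf T ltac:(lra) (a - f T) ltac:(lra)) as [d [Hd Hfd]].
    enough (T <= T - d / 2) by lra.
    apply Hlub. intros t [Ht Hat].
    assert (t <= T) by (apply Hub; auto).
    destruct (Rle_lt_dec t (T - d / 2)) as [| Hclose]; auto.
    assert (Htd : Rabs (t - T) < d) by (unfold Rabs; destruct Rcase_abs; lra).
    specialize (Hfd t Ht Htd). unfold Rabs in Hfd; destruct Rcase_abs in Hfd; lra.
Qed.

Lemma curve_cont01 (G : pt -> Prop) (gamma : R -> pt) (x y : pt) (F : pt -> R) :
  lipschitz1 F -> curve_in G gamma x y -> cont01 (fun t => F (gamma t)).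
Proof.
  intros HF [_ [_ [_ Hcont]]] t Ht eps Heps.
  destruct (Hcont t Ht eps Heps) as [d [Hd Hgd]].
  exists d. split; auto. intros s Hs Hst.
  eapply Rle_lt_trans; [apply lipschitz1_abs, HF | auto].
Qed.

Lemma one_sub_exp_neg_ge (u : R) : 0 <= u -> u / (1 + u) <= 1 - exp (- u).
Proof.
  intros Hu. rewrite exp_Ropp.
  assert (Hexp : / exp u <= / (1 + u)) by (apply Rinv_le_contravar; [lra | apply exp_ineq1_le]).
  replace (u / (1 + u)) with (1 - / (1 + u)) by (field; lra). lra.
Qed.

Lemma le_of_forall_nat_exp (L Q : R) :
  0 <= L -> (forall N, (1 <= N)%nat -> INR N * (1 - exp (- (L / INR N))) <= Q) -> L <= Q.
Proof.
  intros HL HQ.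
  assert (Hbound : forall N, (1 <= N)%nat -> L * INR N <= Q * (INR N + L)).
  { intros N HN. assert (HNpos : 0 < INR N) by (apply lt_0_INR; lia).
    assert (Hu : 0 <= L / INR N) by (apply Rmult_le_pos; [lra | left; now apply Rinv_0_lt_compat]).
    pose proof (one_sub_exp_neg_ge (L / INR N) Hu) as Hexp.
    specialize (HQ N HN).
    replace (L / INR N / (1 + L / INR N)) with (L / (INR N + L)) in Hexp by (field; lra).
    assert (L / (INR N + L) * INR N <= Q) by nra.
    replace (L * INR N) with (L / (INR N + L) * INR N * (INR N + L)) by (field; lra). nra. }
  destruct (Rle_lt_dec L Q) as [| HQL]; auto.
  assert (HQ0 : 0 <= Q) by (specialize (Hbound 1%nat (le_n 1)); simpl in Hbound; nra).
  destruct (INR_unbounded (Q * L / (L - Q))) as [N HN].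
  assert (HN1 : (1 <= N)%nat).
  { destruct N; [simpl in HN | lia].
    assert (0 <= Q * L / (L - Q)) by (apply Rmult_le_pos; [nra | left; apply Rinv_0_lt_compat; lra]). lra. }
  specialize (Hbound N HN1).
  assert (Q * L < INR N * (L - Q)).
  { apply (Rmult_lt_compat_r (L - Q)) in HN; [| lra].
    replace (Q * L / (L - Q) * (L - Q)) with (Q * L) in HN by (field; lra). lra. }
  lra.
Qed.

Lemma exp_le_mono (u v : R) : u <= v -> exp u <= exp v.
Proof. intros [Hlt | ->]; [left; now apply exp_increasing | right; reflexivity]. Qed.

Lemma ln_div_ge0 (R0 R1 : R) : 0 < R1 <= R0 -> 0 <= ln (R0 / R1).
Proof.
  intros HR. assert (Hq : 1 <= R0 / R1).
  { apply (Rmult_le_reg_r R1); [lra |]. unfold Rdiv. rewrite Rmult_assoc, Rinv_l; lra. }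
  destruct Hq as [Hlt | <-]; [left; rewrite <- ln_1; apply ln_increasing; lra | rewrite ln_1; lra].
Qed.

(* [R0 q^k] with [q = (R1/R0)^(1/N)]: [N] geometric steps from [R0] down to [R1]. *)
Definition geom_level (R0 R1 : R) (N k : nat) : R :=
  R0 * exp (- (INR k * (ln (R0 / R1) / INR N))).

Lemma geom_level_succ (R0 R1 : R) (N k : nat) :
  geom_level R0 R1 N (S k) = geom_level R0 R1 N k * exp (- (ln (R0 / R1) / INR N)).
Proof.
  unfold geom_level. rewrite S_INR, Rmult_assoc, <- exp_plus. f_equal. f_equal. ring.
Qed.

Lemma geom_level_range (R0 R1 : R) (N k : nat) :
  0 < R1 <= R0 -> (1 <= N)%nat -> (k <= N)%nat -> R1 <= geom_level R0 R1 N k <= R0.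
Proof.
  intros HR HN Hk. unfold geom_level.
  set (L := ln (R0 / R1)).
  assert (HL : 0 <= L) by now apply ln_div_ge0.
  assert (HNpos : 0 < INR N) by (apply lt_0_INR; lia).
  assert (Hkn : 0 <= INR k <= INR N) by (split; [apply pos_INR | now apply le_INR]).
  assert (Hfrac : 0 <= INR k * (L / INR N) <= L).
  { replace (INR k * (L / INR N)) with (L * (INR k / INR N)) by (field; lra).
    assert (0 <= INR k / INR N <= 1).
    { split; [apply Rmult_le_pos; [lra | left; now apply Rinv_0_lt_compat] |].
      apply (Rmult_le_reg_r (INR N)); auto. field_simplify; lra. }
    nra. }
  split.
  - replace R1 with (R0 * exp (- L)) at 1.
    + apply Rmult_le_compat_l; [lra | apply exp_le_mono; lra].
    + unfold L. rewrite exp_Ropp, exp_ln by (apply Rdiv_lt_0_compat; lra). field; lra.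
  - rewrite <- (Rmult_1_r R0) at 2. rewrite <- exp_0.
    apply Rmult_le_compat_l; [lra | apply exp_le_mono; lra].
Qed.

Section QuasihyperbolicLength.

Variable G : pt -> Prop.

Lemma qh_lower_sum_bounded (gamma : R -> pt) (mu : R) :
  rectifiable gamma -> 0 < mu ->
  (forall t, 0 <= t <= 1 -> mu <= dist_set (boundary G) (gamma t)) ->
  exists M, forall v, qh_lower_sum G gamma v -> v <= M.
Proof.
  intros [B HB] Hmu Hd. exists (/ mu * B). intros v [n [p [m [Hp [Hm ->]]]]].
  apply Rle_trans with (/ mu * sumR n (fun i => cdist (gamma (p (S i))) (gamma (p i)))).
  - rewrite <- sumR_scal. apply sumR_le. intros i Hi.
    apply Rmult_le_compat_r; [apply cdist_ge0 |].
    pose proof (partition01_range n p Hp i ltac:(lia)).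
    pose proof (partition01_range n p Hp (S i) ltac:(lia)).
    pose proof (proj2 (proj2 Hp) i Hi).
    eapply Rle_trans; [apply (Hm i Hi (p i)); lra |].
    apply Rinv_le_contravar; [auto | apply Hd; lra].
  - apply Rmult_le_compat_l; [left; now apply Rinv_0_lt_compat | now apply HB].
Qed.

Lemma qh_length_ge (gamma : R -> pt) (v : R) :
  (exists M, forall w, qh_lower_sum G gamma w -> w <= M) ->
  qh_lower_sum G gamma v -> v <= qh_length G gamma.
Proof. intros Hbdd Hv. destruct (Sup_R_lub _ (ex_intro _ v Hv) Hbdd) as [Hub _]. now apply Hub. Qed.

Lemma k_dist_ge (x y : pt) (c : R) :
  (exists gamma, curve_in G gamma x y /\ rectifiable gamma) ->
  (forall gamma, curve_in G gamma x y -> rectifiable gamma -> c <= qh_length G gamma) ->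
  c <= k_dist G x y.
Proof.
  intros [gamma [Hg Hr]] Hc. unfold k_dist.
  set (V := fun v => exists g, curve_in G g x y /\ rectifiable g /\ v = qh_length G g).
  assert (Hlow : forall v, V v -> c <= v) by (intros v [g [Hg' [Hr' ->]]]; auto).
  assert (HV : exists v, V v) by (exists (qh_length G gamma), gamma; auto).
  destruct (Inf_R_glb V HV (ex_intro _ c Hlow)) as [_ Hglb]. exact (Hglb c Hlow).
Qed.

Variable kappa : R.
Hypothesis Hkappa : 0 < kappa.
Hypothesis Hdist : forall z, G z -> 0 < dist_set (boundary G) z <= kappa * cnorm z.

Lemma cnorm_pos_of_dist (z : pt) : G z -> 0 < cnorm z.
Proof. intros Hz. destruct (Hdist z Hz). pose proof (sqrt_pos (fst z ^ 2 + snd z ^ 2)). unfold cnorm in *. nra. Qed.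

Lemma qh_lower_sum_levels (gamma : R -> pt) (x y : pt) (N : nat) (a : nat -> R) :
  curve_in G gamma x y ->
  (forall k, (k <= N)%nat -> cnorm y <= a k <= cnorm x) ->
  (forall k, (k < N)%nat -> a (S k) <= a k) ->
  exists v, qh_lower_sum G gamma v /\ sumR N (fun k => (a k - a (S k)) / (kappa * a k)) <= v.
Proof.
  intros Hg Ha Hmon. pose proof Hg as [Hg0 [Hg1 [Hin _]]].
  assert (Hy : 0 < cnorm y) by (rewrite <- Hg1; apply cnorm_pos_of_dist, Hin; lra).
  set (f := fun t => cnorm (gamma t)).
  assert (Hf : cont01 f) by exact (curve_cont01 G gamma x y cnorm cnorm_lipschitz1 Hg).
  set (T := fun k => last_reach f (a k)).
  assert (HT : forall k, (k <= N)%nat ->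
            0 <= T k <= 1 /\ f (T k) = a k /\ forall t, T k < t <= 1 -> f t < a k).
  { intros k Hk. apply last_reach_spec; auto. unfold f; rewrite Hg0, Hg1. now apply Ha. }
  assert (HTmon : forall k, (k < N)%nat -> T k <= T (S k)).
  { intros k Hk. apply last_reach_antitone. unfold f; rewrite Hg0.
    split; [now apply Hmon | apply Ha; lia]. }
  set (w := fun k => / (kappa * a k)).
  set (p := pad01 N T).
  assert (Hp : partition01 (S (S N)) p) by (apply partition01_pad01; auto; intros; apply HT; lia).
  exists (sumR (S (S N)) (fun i => pad0 N w i * cdist (gamma (p (S i))) (gamma (p i)))). split.
  - exists (S (S N)), p, (pad0 N w). split; [exact Hp | split; [| reflexivity]].
    intros i Hi t Ht.
    pose proof (partition01_range _ _ Hp i ltac:(lia)).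
    pose proof (partition01_range _ _ Hp (S i) ltac:(lia)).
    destruct (Hdist (gamma t) (Hin t ltac:(lra))) as [Hd_pos Hd_le].
    destruct i as [| j]; [left; now apply Rinv_0_lt_compat |].
    unfold pad0, p, pad01 in *. destruct (Nat.ltb_spec j N); [| left; now apply Rinv_0_lt_compat].
    destruct (Nat.leb_spec j N), (Nat.leb_spec (S j) N); try lia.
    assert (Hft : f t <= a j).
    { destruct (HT j ltac:(lia)) as [_ [HfT Hafter]].
      destruct (Req_dec t (T j)) as [-> | NE]; [lra | left; apply Hafter; lra]. }
    apply Rinv_le_contravar; auto. unfold f in Hft. nra.
  - pose proof (sumR_pad N T w (fun s t => cdist (gamma s) (gamma t))) as Hsum.
    cbv beta in Hsum. unfold p. rewrite Hsum. apply sumR_le. intros k Hk.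
    destruct (HT k ltac:(lia)) as [_ [HfTk _]]. destruct (HT (S k) ltac:(lia)) as [_ [HfTSk _]].
    pose proof (cnorm_lipschitz1 (gamma (T k)) (gamma (T (S k)))) as Hlip.
    rewrite cdist_sym in Hlip. unfold f in HfTk, HfTSk. rewrite HfTk, HfTSk in Hlip.
    assert (0 < a k) by (pose proof (Ha k ltac:(lia)); lra).
    unfold w, Rdiv. rewrite Rmult_comm. apply Rmult_le_compat_l; [| lra].
    left; apply Rinv_0_lt_compat; nra.
Qed.

Lemma qh_length_ge_log (gamma : R -> pt) (x y : pt) :
  curve_in G gamma x y -> (exists M, forall v, qh_lower_sum G gamma v -> v <= M) ->
  cnorm y <= cnorm x -> / kappa * ln (cnorm x / cnorm y) <= qh_length G gamma.
Proof.
  intros Hg Hbdd Hxy. pose proof Hg as [_ [Hg1 [Hin _]]].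
  assert (Hy : 0 < cnorm y) by (rewrite <- Hg1; apply cnorm_pos_of_dist, Hin; lra).
  set (L := ln (cnorm x / cnorm y)). set (Q := qh_length G gamma).
  assert (HL : 0 <= L) by (apply ln_div_ge0; lra).
  enough (L <= kappa * Q).
  { apply (Rmult_le_reg_l kappa); auto. rewrite <- Rmult_assoc, Rinv_r, Rmult_1_l; lra. }
  apply le_of_forall_nat_exp; auto. intros N HN.
  assert (HNpos : 0 < INR N) by (apply lt_0_INR; lia).
  set (q := exp (- (L / INR N))).
  assert (Hq : q <= 1).
  { rewrite <- exp_0. apply exp_le_mono.
    enough (0 <= L / INR N) by lra. apply Rmult_le_pos; [lra | left; now apply Rinv_0_lt_compat]. }
  set (a := geom_level (cnorm x) (cnorm y) N).
  assert (Ha : forall k, (k <= N)%nat -> cnorm y <= a k <= cnorm x)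
    by (intros; apply geom_level_range; auto; lra).
  assert (Ha_succ : forall k, a (S k) = a k * q) by (intros; apply geom_level_succ).
  assert (Hmon : forall k, (k < N)%nat -> a (S k) <= a k).
  { intros k Hk. rewrite Ha_succ. pose proof (Ha k ltac:(lia)). nra. }
  destruct (qh_lower_sum_levels gamma x y N a Hg Ha Hmon) as [v [Hv Hsum]].
  pose proof (qh_length_ge gamma v Hbdd Hv) as HvQ. fold Q in HvQ.
  rewrite (sumR_ext N _ (fun _ => (1 - q) / kappa)), sumR_const in Hsum.
  - replace (INR N * (1 - q)) with (kappa * (INR N * ((1 - q) / kappa))) by (field; lra).
    apply Rmult_le_compat_l; lra.
  - intros k Hk. rewrite Ha_succ. pose proof (Ha k ltac:(lia)). field. split; lra.
Qed.

End QuasihyperbolicLength.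

(* Signed distances from [z] to the lines carrying the two edges of [S_alpha]. *)
Definition gap_lo (z : pt) : R := snd z.
Definition gap_hi (alpha : R) (z : pt) : R := fst z * sin alpha - snd z * cos alpha.

Lemma gap_lo_lipschitz1 : lipschitz1 gap_lo.
Proof.
  intros z w. pose proof (unit_functional_lipschitz1 0 1 ltac:(ring) z w) as H.
  unfold gap_lo; simpl in H; lra.
Qed.

Lemma gap_hi_lipschitz1 (alpha : R) : lipschitz1 (gap_hi alpha).
Proof.
  assert (Hunit : sin alpha ^ 2 + (- cos alpha) ^ 2 = 1).
  { rewrite <- (sin2_cos2 alpha). unfold Rsqr; ring. }
  intros z w. pose proof (unit_functional_lipschitz1 _ _ Hunit z w) as H.
  unfold gap_hi; simpl in H; lra.
Qed.

Lemma gap_lo_lerp (w z : pt) (s : R) :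
  gap_lo (lerp w z s) = (1 - s) * gap_lo w + s * gap_lo z.
Proof. unfold gap_lo, lerp; simpl; ring. Qed.

Lemma gap_hi_lerp (alpha : R) (w z : pt) (s : R) :
  gap_hi alpha (lerp w z s) = (1 - s) * gap_hi alpha w + s * gap_hi alpha z.
Proof. unfold gap_hi, lerp; simpl; ring. Qed.

Section Sector.

Variable alpha : R.
Hypothesis Halpha : 0 < alpha <= PI.

Lemma sector_gaps_pos (z : pt) : sector alpha z -> 0 < gap_lo z /\ 0 < gap_hi alpha z.
Proof.
  intros [rho [t [Hrho [Ht ->]]]]. unfold gap_lo, gap_hi; cbn [fst snd]. split.
  - apply Rmult_lt_0_compat; [lra | apply sin_gt_0; lra].
  - replace (rho * cos t * sin alpha - rho * sin t * cos alpha) with (rho * sin (alpha - t))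
      by (rewrite sin_minus; ring).
    apply Rmult_lt_0_compat; [lra | apply sin_gt_0; lra].
Qed.

Lemma gaps_pos_sector (z : pt) : 0 < gap_lo z -> 0 < gap_hi alpha z -> sector alpha z.
Proof.
  destruct z as [a b]; unfold gap_lo, gap_hi; cbn [fst snd]; intros Hb Hab.
  set (rho := sqrt (a ^ 2 + b ^ 2)).
  assert (Hrho : 0 < rho) by (apply sqrt_lt_R0; nra).
  assert (Hrho2 : rho * rho = a ^ 2 + b ^ 2) by (apply sqrt_sqrt; nra).
  assert (Ha : -1 <= a / rho <= 1).
  { split; apply (Rmult_le_reg_r rho); auto; unfold Rdiv;
      rewrite Rmult_assoc, Rinv_l; nra. }
  set (t := acos (a / rho)).
  assert (Hcos : cos t = a / rho) by (apply cos_acos; auto).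
  assert (Hsin : sin t = b / rho).
  { unfold t. rewrite sin_acos by auto.
    rewrite <- (sqrt_Rsqr (b / rho)) by (apply Rlt_le, Rdiv_lt_0_compat; auto).
    f_equal. unfold Rsqr. field_simplify; [|lra|lra].
    replace (rho ^ 2) with (a ^ 2 + b ^ 2) by (rewrite <- Hrho2; ring). field; nra. }
  assert (Hsin_pos : 0 < sin t) by (rewrite Hsin; apply Rdiv_lt_0_compat; auto).
  assert (Ht : 0 <= t <= PI) by apply acos_bound.
  assert (Hsin_diff : 0 < sin (alpha - t)).
  { rewrite sin_minus, Hcos, Hsin.
    replace (sin alpha * (a / rho) - cos alpha * (b / rho))
      with ((a * sin alpha - b * cos alpha) / rho) by (field; lra).
    now apply Rdiv_lt_0_compat. }
  exists rho, t. repeat split; auto.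
  - destruct (Req_dec t 0) as [E | ?]; [rewrite E, sin_0 in Hsin_pos; lra | lra].
  - destruct (Rlt_le_dec t alpha) as [? | Hle]; auto.
    assert (0 <= sin (t - alpha)) by (apply sin_ge_0; lra).
    rewrite <- Ropp_minus_distr, sin_neg in Hsin_diff; lra.
  - rewrite Hcos, Hsin; f_equal; field; lra.
Qed.

Lemma sector_lerp (w z : pt) (s : R) :
  0 <= gap_lo w -> 0 <= gap_hi alpha w -> sector alpha z -> 0 < s <= 1 ->
  sector alpha (lerp w z s).
Proof.
  intros Hw1 Hw2 Hz Hs. destruct (sector_gaps_pos z Hz) as [Hz1 Hz2].
  apply gaps_pos_sector; [rewrite gap_lo_lerp | rewrite gap_hi_lerp]; nra.
Qed.

Lemma boundary_gap_bound (z w : pt) :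
  sector alpha z -> boundary (sector alpha) w ->
  Rmin (gap_lo z) (gap_hi alpha z) <= cdist z w.
Proof.
  intros Hz Hw.
  pose proof (Rmin_l (gap_lo z) (gap_hi alpha z)); pose proof (Rmin_r (gap_lo z) (gap_hi alpha z)).
  set (m := Rmin (gap_lo z) (gap_hi alpha z)) in *.
  destruct (Rle_lt_dec m (cdist z w)) as [| Hlt]; auto; exfalso.
  destruct (Hw (m - cdist z w)) as [_ [u [Hu Hwu]]]; [lra |].
  pose proof (cdist_triangle z w u) as Htri. rewrite (cdist_sym w u) in Htri.
  pose proof (gap_lo_lipschitz1 z u); pose proof (gap_hi_lipschitz1 alpha z u).
  apply Hu, gaps_pos_sector; lra.
Qed.

Lemma edge_boundary (z w : pt) :
  sector alpha z -> 0 <= gap_lo w -> 0 <= gap_hi alpha w ->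
  gap_lo w = 0 \/ gap_hi alpha w = 0 -> boundary (sector alpha) w.
Proof.
  intros Hz Hw1 Hw2 Hedge eps Heps. split.
  - pose proof (cdist_ge0 z w). set (D := cdist z w) in *.
    set (s := eps / (eps + D + 1)).
    assert (Hs0 : 0 < s) by (apply Rdiv_lt_0_compat; lra).
    assert (Hs_eps : s * (eps + D + 1) = eps) by (unfold s; field; lra).
    assert (Hs : 0 < s < 1) by nra.
    assert (HsD : s * D < eps) by nra.
    exists (lerp w z s). split; [apply sector_lerp; auto; lra |].
    rewrite <- (lerp0 w z) at 2. rewrite cdist_lerp, Rminus_0_r, Rabs_pos_eq; fold D; lra.
  - exists w. rewrite cdist_refl. split; auto.
    intros Hw. destruct (sector_gaps_pos w Hw). lra.
Qed.

Lemma near_boundary_point (z : pt) :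
  sector alpha z -> exists w, boundary (sector alpha) w /\ cdist z w <= cnorm z * sin (alpha / 2).
Proof.
  intros Hz. pose proof Hz as [rho [t [Hrho [Ht Ez]]]].
  rewrite Ez, cnorm_polar by lra.
  assert (Hsin_alpha : 0 <= sin alpha) by (apply sin_ge_0; lra).
  (* Project z orthogonally onto the nearer edge: the ray of angle 0 or the ray of angle alpha. *)
  destruct (Rle_lt_dec t (alpha / 2)) as [Hle | Hgt].
  - exists (rho * cos (t - 0) * cos 0, rho * cos (t - 0) * sin 0). split.
    + rewrite Rminus_0_r, cos_0, sin_0.
      assert (0 <= cos t) by (apply cos_ge_0; lra).
      apply (edge_boundary z); auto; unfold gap_lo, gap_hi; cbn [fst snd]; try lra.
      assert (0 <= rho * cos t * 1 * sin alpha) by (repeat apply Rmult_le_pos; lra). lra.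
    + rewrite cdist_ray_projection, Rminus_0_r, Rabs_pos_eq by (try apply sin_ge_0; lra).
      apply Rmult_le_compat_l; [lra | apply sin_incr_1; lra].
  - set (c := rho * cos (t - alpha)).
    assert (Hc : 0 <= c) by (apply Rmult_le_pos; [lra | apply cos_ge_0; lra]).
    exists (c * cos alpha, c * sin alpha). split.
    + apply (edge_boundary z); auto; unfold gap_lo, gap_hi; cbn [fst snd].
      * now apply Rmult_le_pos.
      * right; ring.
      * right; ring.
    + unfold c. rewrite cdist_ray_projection by lra.
      rewrite <- Ropp_minus_distr, sin_neg, Rabs_Ropp, Rabs_pos_eq by (apply sin_ge_0; lra).
      apply Rmult_le_compat_l; [lra | apply sin_incr_1; lra].
Qed.

Lemma dist_boundary_sector_ge (z : pt) :
  sector alpha z -> Rmin (gap_lo z) (gap_hi alpha z) <= dist_set (boundary (sector alpha)) z.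
Proof.
  intros Hz. destruct (near_boundary_point z Hz) as [w [Hw _]].
  apply dist_set_ge; [now exists w |]. intros u Hu. exact (boundary_gap_bound z u Hz Hu).
Qed.

Lemma dist_boundary_sector_le (z : pt) :
  sector alpha z -> dist_set (boundary (sector alpha)) z <= sin (alpha / 2) * cnorm z.
Proof.
  intros Hz. destruct (near_boundary_point z Hz) as [w [Hw Hzw]].
  rewrite Rmult_comm. eapply Rle_trans; [exact (dist_set_le _ z w Hw) | exact Hzw].
Qed.

Lemma dist_boundary_sector_pos (z : pt) : sector alpha z -> 0 < dist_set (boundary (sector alpha)) z.
Proof.
  intros Hz. pose proof (dist_boundary_sector_ge z Hz). destruct (sector_gaps_pos z Hz).
  unfold Rmin in *; destruct Rle_dec; lra.
Qed.

Lemma sector_lower_sums_bounded (gamma : R -> pt) (x y : pt) :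
  curve_in (sector alpha) gamma x y -> rectifiable gamma ->
  exists M, forall v, qh_lower_sum (sector alpha) gamma v -> v <= M.
Proof.
  intros Hg Hr. pose proof Hg as [_ [_ [Hin _]]].
  destruct (cont01_min _ (curve_cont01 _ _ _ _ _ gap_lo_lipschitz1 Hg)) as [c1 [Hc1 Hmin1]].
  destruct (cont01_min _ (curve_cont01 _ _ _ _ _ (gap_hi_lipschitz1 alpha) Hg)) as [c2 [Hc2 Hmin2]].
  pose proof (proj1 (sector_gaps_pos _ (Hin c1 Hc1))). pose proof (proj2 (sector_gaps_pos _ (Hin c2 Hc2))).
  apply (qh_lower_sum_bounded _ gamma (Rmin (gap_lo (gamma c1)) (gap_hi alpha (gamma c2)))); auto.
  - unfold Rmin; destruct Rle_dec; lra.
  - intros t Ht. eapply Rle_trans; [| apply dist_boundary_sector_ge, Hin, Ht].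
    specialize (Hmin1 t Ht). specialize (Hmin2 t Ht). unfold Rmin. repeat destruct Rle_dec; lra.
Qed.

Lemma sector_segment_curve (x y : pt) :
  sector alpha x -> sector alpha y ->
  exists gamma, curve_in (sector alpha) gamma x y /\ rectifiable gamma.
Proof.
  intros Hx Hy. exists (lerp x y).
  pose proof (cdist_ge0 y x). destruct (sector_gaps_pos x Hx).
  split; [split; [apply lerp0 | split; [apply lerp1 | split]] |].
  - intros t Ht. destruct (Req_dec t 0) as [-> | Hnz]; [now rewrite lerp0 |].
    apply sector_lerp; auto; lra.
  - intros t Ht eps Heps. exists (eps / (cdist y x + 1)). split; [apply Rdiv_lt_0_compat; lra |].
    intros s Hs Hst. rewrite cdist_lerp.
    apply Rle_lt_trans with (eps / (cdist y x + 1) * cdist y x); [apply Rmult_le_compat_r; lra |].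
    apply (Rmult_lt_reg_r (cdist y x + 1)); [lra |].
    replace (eps / (cdist y x + 1) * cdist y x * (cdist y x + 1)) with (eps * cdist y x) by (field; lra).
    nra.
  - exists (cdist y x). intros n p [P0 [P1 Pmon]].
    rewrite (sumR_ext n _ (fun i => - p i * cdist y x - - p (S i) * cdist y x)).
    + rewrite sumR_telescope, P0, P1. lra.
    + intros i Hi. rewrite cdist_lerp, Rabs_pos_eq by (specialize (Pmon i Hi); lra). ring.
Qed.

End Sector.

Theorem lemma5p3 (alpha : R) (x y : pt) :
  0 < alpha <= PI ->
  sector alpha x -> sector alpha y ->
  cnorm y <= cnorm x ->
  k_dist (sector alpha) x y >= / sin (alpha / 2) * ln (cnorm x / cnorm y).
Proof.
  intros Halpha Hx Hy Hxy. apply Rle_ge, k_dist_ge.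
  - now apply sector_segment_curve.
  - intros gamma Hg Hr. apply (qh_length_ge_log _ (sin (alpha / 2))); auto.
    + apply sin_gt_0; lra.
    + intros z Hz. split.
      * now apply dist_boundary_sector_pos.
      * now apply dist_boundary_sector_le.
    + now apply (sector_lower_sums_bounded alpha Halpha gamma x y).
Qed.
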